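(* If $(\mathcal{C},P)$ is a heaco, then the opposite doctrine $(\mathcal{C},P^o)$ is a tripos (with full comprehension).
   Context: A doctrine is a pair $(\mathcal{C},P)$, $\mathcal{C}$ a category with finite products, $P:\mathcal{C}^{op}\to\mathbf{Pos}$ a functor, $f^*=P(f)$; primary: each $P(A)$ has binary meets preserved by each $f^*$. The opposite doctrine has $P^o(A)=P(A)^{op}$, $P^o(f)=f^*$. Elementary: primary and for every $A$ there is $\delta_A\in P(A\times A)$ such that for every $X$ the assignment $\psi\mapsto\langle\pi_1,\pi_2\rangle^*\psi\wedge\langle\pi_2,\pi_3\rangle^*\delta_A$ is a left adjoint $P(X\times A)\to P(X\times A\times A)$ to $(id_X\times\Delta_A)^*$. Graph of $f:X\to A$: $\mathcal{G}(f)=(f\times id_A)^*\delta_A$. Stable initial object: initial $0$ with $X\times0\cong0$ for all $X$. AC: for every $A$ not stable initial and every $\Gamma$, $\pi_\Gamma^*$ ($\pi_\Gamma:\Gamma\times A\to\Gamma$) has a left adjoint $\Sigma_{\pi_\Gamma}$ and each $\psi\in P(\Gamma\times A)$ has a chosen $\epsilon_\psi:\Gamma\to A$ with $\Sigma_{\pi_\Gamma}\psi=\langle id_\Gamma,\epsilon_\psi\rangle^*\psi$ (also with factors swapped). Co-comprehension: each $P(A)$ has a bottom and each $\alpha$ has $\lceil\alpha\rceil:\{\alpha\}^o\to A$ with $\lceil\alpha\rceil^*\alpha=\bot$, universal among $f$ with $f^*\alpha=\bot$; full if $\lceil\beta\rceil$ factoring through $\lceil\alpha\rceil$ implies $\alpha\le\beta$.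 Comprehension is the dual notion (tops, $\lfloor\alpha\rfloor:\{\alpha\}\to A$ universal among $f$ with $f^*\alpha=\top$; full if $\lfloor\alpha\rfloor$ factoring through $\lfloor\beta\rfloor$ implies $\alpha\le\beta$). An eaco is an elementary doctrine with full co-comprehension satisfying AC such that for every $f:X\to A$, $\alpha\in P(A)$: $f^*\langle\epsilon_{\mathcal{G}(\lceil\alpha\rceil)},id_A\rangle^*\mathcal{G}(\lceil\alpha\rceil)=\langle\epsilon_{\mathcal{G}(\lceil f^*\alpha\rceil)},id_X\rangle^*\mathcal{G}(\lceil f^*\alpha\rceil)$. Higher order: for every $A$ there are $\mathbb{P}(A)$ and $\in_A\in P(A\times\mathbb{P}(A))$ such that every $\phi\in P(A\times Y)$ equals $(id_A\times\chi_\phi)^*\in_A$ for some $\chi_\phi:Y\to\mathbb{P}(A)$. A heaco is a higher order eaco. A tripos is a doctrine such that (i) each $P(A)$ is a Heyting algebra and each $f^*$ a Heyting homomorphism; (ii) for every product projection $f$, $f^*$ has left and right adjoints $\Sigma_f,\Pi_f$ satisfying Beck–Chevalley ($h^*\Sigma_f\gamma=\Sigma_gk^*\gamma$, $h^*\Pi_f\gamma=\Pi_gk^*\gamma$ for pullback squares $h\circ g=f\circ k$); (iii) for each $X$ there is $\delta_X\in P(X\times X)$ with $\top_X\le\Delta_X^*\alpha$ iff $\delta_X\le\alpha$; (iv) it is higher order. *)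

Set Implicit Arguments.

Record Cat : Type := {
  Ob : Type;
  Hom : Ob -> Ob -> Type;
  idm : forall A, Hom A A;
  comp : forall A B C, Hom B C -> Hom A B -> Hom A C;
  comp_idl : forall A B (f : Hom A B), comp (idm B) f = f;
  comp_idr : forall A B (f : Hom A B), comp f (idm A) = f;
  comp_assoc : forall A B C D (f : Hom A B) (g : Hom B C) (h : Hom C D),
      comp h (comp g f) = comp (comp h g) f;
  term : Ob;
  bang : forall A, Hom A term;
  bang_unique : forall A (f : Hom A term), f = bang A;
  prod : Ob -> Ob -> Ob;
  pi1 : forall A B, Hom (prod A B) A;
  pi2 : forall A B, Hom (prod A B) B;
  pair : forall X A B, Hom X A -> Hom X B -> Hom X (prod A B);
  pi1_pair : forall X A B (f : Hom X A) (g : Hom X B), comp (pi1 A B) (pair f g) = f;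
  pi2_pair : forall X A B (f : Hom X A) (g : Hom X B), comp (pi2 A B) (pair f g) = g;
  pair_unique : forall X A B (h : Hom X (prod A B)),
      h = pair (comp (pi1 A B) h) (comp (pi2 A B) h)
}.

Arguments Hom {c} _ _.
Arguments idm {c} A.
Arguments comp {c A B C} _ _.
Arguments term {c}.
Arguments bang {c} A.
Arguments prod {c} _ _.
Arguments pi1 {c A B}.
Arguments pi2 {c A B}.
Arguments pair {c X A B} _ _.

Section CatDefs.
Context {C : Cat}.

Definition prodmap {X Y A B : Ob C} (f : Hom X A) (g : Hom Y B) : Hom (prod X Y) (prod A B) :=
  pair (comp f pi1) (comp g pi2).

Definition diag (A : Ob C) : Hom A (prod A A) := pair (idm A) (idm A).

Definition is_iso {A B : Ob C} (i : Hom A B) : Prop :=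
  exists j : Hom B A, comp j i = idm A /\ comp i j = idm B.

Definition isomorphic (A B : Ob C) : Prop := exists i : Hom A B, is_iso i.

Definition is_initial (Z : Ob C) : Prop :=
  forall X, exists f : Hom Z X, forall g : Hom Z X, g = f.

Definition is_stable_initial (Z : Ob C) : Prop :=
  is_initial Z /\ forall X, isomorphic (prod X Z) Z.

Definition is_product {W X Z : Ob C} (f : Hom W X) (g : Hom W Z) : Prop :=
  forall U (a : Hom U X) (b : Hom U Z),
    exists u : Hom U W, (comp f u = a /\ comp g u = b) /\
      forall u' : Hom U W, comp f u' = a -> comp g u' = b -> u' = u.

Definition is_product_projection {W X : Ob C} (f : Hom W X) : Prop :=
  exists (Z : Ob C) (g : Hom W Z), is_product f g.

Definition is_pullback {X Y W V : Ob C} (h : Hom Y X) (f : Hom W X)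
    (g : Hom V Y) (k : Hom V W) : Prop :=
  comp h g = comp f k /\
  forall U (a : Hom U Y) (b : Hom U W), comp h a = comp f b ->
    exists u : Hom U V, (comp g u = a /\ comp k u = b) /\
      forall u' : Hom U V, comp g u' = a -> comp k u' = b -> u' = u.

End CatDefs.

Record Doctrine (C : Cat) : Type := {
  Pr : Ob C -> Type;
  le : forall A, Pr A -> Pr A -> Prop;
  le_refl : forall A (a : Pr A), le a a;
  le_trans : forall A (a b c : Pr A), le a b -> le b c -> le a c;
  le_antisym : forall A (a b : Pr A), le a b -> le b a -> a = b;
  re : forall (X A : Ob C), Hom X A -> Pr A -> Pr X;
  re_mono : forall X A (f : Hom X A) (a b : Pr A), le a b -> le (@re X A f a) (@re X A f b);
  re_id : forall A (a : Pr A), @re A A (idm A) a = a;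
  re_comp : forall X Y Z (f : Hom X Y) (g : Hom Y Z) (a : Pr Z),
      @re X Z (comp g f) a = @re X Y f (@re Y Z g a)
}.

Arguments Pr {C} d _.
Arguments le {C d A} _ _.
Arguments re {C d X A} _ _.

Definition op_doctrine {C : Cat} (D : Doctrine C) : Doctrine C :=
  {| Pr := Pr D;
     le := fun A (a b : Pr D A) => le b a;
     le_refl := fun A a => @le_refl C D A a;
     le_trans := fun A a b c h1 h2 => @le_trans C D A c b a h2 h1;
     le_antisym := fun A a b h1 h2 => @le_antisym C D A a b h2 h1;
     re := fun X A f a => re f a;
     re_mono := fun X A f a b h => @re_mono C D X A f b a h;
     re_id := fun A a => @re_id C D A a;
     re_comp := fun X Y Z f g a => @re_comp C D X Y Z f g a |}.

Section DoctrineDefs.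
Context {C : Cat} (D : Doctrine C).

Definition is_top {A} (t : Pr D A) : Prop := forall a, le a t.
Definition is_bot {A} (b : Pr D A) : Prop := forall a, le b a.
Definition is_meet {A} (m a b : Pr D A) : Prop :=
  le m a /\ le m b /\ forall c, le c a -> le c b -> le c m.
Definition is_join {A} (j a b : Pr D A) : Prop :=
  le a j /\ le b j /\ forall c, le a c -> le b c -> le j c.
Definition is_imp {A} (x a b : Pr D A) : Prop :=
  forall c, le c x <-> (forall m, is_meet m c a -> le m b).

Definition primary : Prop :=
  (forall A (a b : Pr D A), exists m, is_meet m a b) /\
  (forall X A (f : Hom X A) (a b m : Pr D A),
      is_meet m a b -> is_meet (re f m) (re f a) (re f b)).

(** delta is an elementary structure: for X x A x A := X x (A x A),
    psi |-> <pi1,pi2>^* psi /\ <pi2,pi3>^* delta_A is left adjoint to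
    (id_X x Delta_A)^* *)
Definition elementary_delta (delta : forall A, Pr D (prod A A)) : Prop :=
  forall (A X : Ob C) (psi : Pr D (prod X A)) (phi : Pr D (prod X (prod A A)))
         (m : Pr D (prod X (prod A A))),
    is_meet m (re (pair pi1 (comp pi1 pi2)) psi)
              (re (pair (comp pi1 pi2) (comp pi2 pi2)) (delta A)) ->
    (le m phi <-> le psi (re (prodmap (idm X) (diag A)) phi)).

Definition graph (delta : forall A, Pr D (prod A A)) {X A : Ob C} (f : Hom X A)
  : Pr D (prod X A) := re (prodmap f (idm A)) (delta A).

Definition higher_order : Prop :=
  forall A : Ob C, exists (PA : Ob C) (inA : Pr D (prod A PA)),
    forall (Y : Ob C) (phi : Pr D (prod A Y)),
      exists chi : Hom Y PA, phi = re (prodmap (idm A) chi) inA.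

Definition left_adj {W X : Ob C} (f : Hom W X) (S : Pr D W -> Pr D X) : Prop :=
  forall psi phi, le (S psi) phi <-> le psi (re f phi).
Definition right_adj {W X : Ob C} (f : Hom W X) (Pi : Pr D W -> Pr D X) : Prop :=
  forall phi psi, le (re f phi) psi <-> le phi (Pi psi).

Definition tripos : Prop :=
  (forall A : Ob C,
     (exists t : Pr D A, is_top t) /\ (exists b : Pr D A, is_bot b) /\
     (forall a b : Pr D A, exists m, is_meet m a b) /\
     (forall a b : Pr D A, exists j, is_join j a b) /\
     (forall a b : Pr D A, exists i, is_imp i a b)) /\
  (forall X A (f : Hom X A),
     (forall t : Pr D A, is_top t -> is_top (re f t)) /\
     (forall b : Pr D A, is_bot b -> is_bot (re f b)) /\
     (forall m a b : Pr D A, is_meet m a b -> is_meet (re f m) (re f a) (re f b)) /\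
     (forall j a b : Pr D A, is_join j a b -> is_join (re f j) (re f a) (re f b)) /\
     (forall i a b : Pr D A, is_imp i a b -> is_imp (re f i) (re f a) (re f b))) /\
  (forall W X (f : Hom W X), is_product_projection f ->
     (exists S, left_adj f S) /\ (exists Pi, right_adj f Pi)) /\
  (forall (X Y W V : Ob C) (f : Hom W X) (h : Hom Y X) (g : Hom V Y) (k : Hom V W),
     is_product_projection f -> is_product_projection g -> is_pullback h f g k ->
     (forall Sf Sg, left_adj f Sf -> left_adj g Sg ->
        forall gamma, re h (Sf gamma) = Sg (re k gamma)) /\
     (forall Pf Pg, right_adj f Pf -> right_adj g Pg ->
        forall gamma, re h (Pf gamma) = Pg (re k gamma))) /\
  (forall X : Ob C, exists delta : Pr D (prod X X), forall alpha : Pr D (prod X X),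
     (forall t : Pr D X, is_top t -> le t (re (diag X) alpha)) <-> le delta alpha) /\
  higher_order.

Definition is_comprehension {A O : Ob C} (alpha : Pr D A) (c : Hom O A) : Prop :=
  is_top (re c alpha) /\
  forall X (f : Hom X A), is_top (re f alpha) ->
    exists g : Hom X O, comp c g = f /\ forall g' : Hom X O, comp c g' = f -> g' = g.

Definition has_full_comprehension : Prop :=
  (forall A : Ob C, exists t : Pr D A, is_top t) /\
  (forall A (alpha : Pr D A), exists (O : Ob C) (c : Hom O A), is_comprehension alpha c) /\
  (forall A (alpha beta : Pr D A) (O1 O2 : Ob C) (c : Hom O1 A) (d : Hom O2 A),
     is_comprehension alpha c -> is_comprehension beta d ->
     (exists g : Hom O1 O2, comp d g = c) -> le alpha beta).

Record HeacoStr : Type := {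
  hs_primary : primary;
  hs_delta : forall A, Pr D (prod A A);
  hs_elementary : elementary_delta hs_delta;
  hs_bot : forall A, Pr D A;
  hs_bot_spec : forall A, is_bot (hs_bot A);
  hs_coc : forall A, Pr D A -> Ob C;
  hs_ccl : forall A (alpha : Pr D A), Hom (@hs_coc A alpha) A;
  hs_ccl_bot : forall A (alpha : Pr D A), re (@hs_ccl A alpha) alpha = hs_bot _;
  hs_ccl_univ : forall A (alpha : Pr D A) X (f : Hom X A), re f alpha = hs_bot X ->
      exists g : Hom X (@hs_coc A alpha), comp (@hs_ccl A alpha) g = f /\
        forall g', comp (@hs_ccl A alpha) g' = f -> g' = g;
  hs_ccl_full : forall A (alpha beta : Pr D A),
      (exists g : Hom (@hs_coc A beta) (@hs_coc A alpha), comp (@hs_ccl A alpha) g = @hs_ccl A beta) ->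
      le alpha beta;
  (* AC, for pi_G : G x A -> G *)
  hs_Sigma : forall G A, ~ is_stable_initial A -> Pr D (prod G A) -> Pr D G;
  hs_Sigma_adj : forall G A (h : ~ is_stable_initial A),
      left_adj (pi1 : Hom (prod G A) G) (@hs_Sigma G A h);
  hs_eps : forall G A, ~ is_stable_initial A -> Pr D (prod G A) -> Hom G A;
  hs_eps_spec : forall G A (h : ~ is_stable_initial A) (psi : Pr D (prod G A)),
      @hs_Sigma G A h psi = re (pair (idm G) (@hs_eps G A h psi)) psi;
  (* AC with factors swapped, for pi_G : A x G -> G *)
  hs_Sigma' : forall G A, ~ is_stable_initial A -> Pr D (prod A G) -> Pr D G;
  hs_Sigma'_adj : forall G A (h : ~ is_stable_initial A),
      left_adj (pi2 : Hom (prod A G) G) (@hs_Sigma' G A h);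
  hs_eps' : forall G A, ~ is_stable_initial A -> Pr D (prod A G) -> Hom G A;
  hs_eps'_spec : forall G A (h : ~ is_stable_initial A) (psi : Pr D (prod A G)),
      @hs_Sigma' G A h psi = re (pair (@hs_eps' G A h psi) (idm G)) psi;
  (* eaco condition (meaningful when the co-comprehension objects are not
     stable initial, so that the relevant epsilons exist) *)
  hs_eaco : forall X A (f : Hom X A) (alpha : Pr D A)
      (h1 : ~ is_stable_initial (@hs_coc A alpha))
      (h2 : ~ is_stable_initial (@hs_coc X (re f alpha))),
      re f (re (pair (@hs_eps' A (@hs_coc A alpha) h1
                        (graph hs_delta (@hs_ccl A alpha))) (idm A))
               (graph hs_delta (@hs_ccl A alpha)))
      = re (pair (@hs_eps' X (@hs_coc X (re f alpha)) h2
                    (graph hs_delta (@hs_ccl X (re f alpha)))) (idm X))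
           (graph hs_delta (@hs_ccl X (re f alpha)));
  hs_higher : higher_order
}.

Definition heaco : Prop := inhabited HeacoStr.

End DoctrineDefs.

From Stdlib Require Import Classical ClassicalEpsilon.

(* In a heaco every fibre P(A) is a Boolean algebra. The complement of z is
   the formula "exists y, ceil(z) y = x", whose existential is witnessed by AC;
   the universal property of co-comprehension shows that it is a complement,
   and the eaco condition makes reindexing preserve bottom, hence complements.
   De Morgan then turns meets into joins, b /\ ~a is a co-implication, and
   ~ Sigma ~ is right adjoint to reindexing along a projection, with
   Beck-Chevalley inherited from Sigma, which AC computes as substitution along
   a section. Reversing the order gives a tripos whose equality predicate is
   ~ delta, and co-comprehension becomes full comprehension. *)

#[local] Arguments le_refl {C d A} a.
#[local] Arguments le_trans {C d A a} b {c}.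
#[local] Arguments le_antisym {C d A a b}.
#[local] Arguments re_mono {C d X A} f {a b}.
#[local] Arguments re_id {C d A} a.
#[local] Arguments re_comp {C d X Y Z} f g a.
#[local] Arguments comp_idl {c A B} f.
#[local] Arguments comp_idr {c A B} f.
#[local] Arguments comp_assoc {c A B C D} f g h.
#[local] Arguments pi1_pair {c X A B} f g.
#[local] Arguments pi2_pair {c X A B} f g.
#[local] Arguments pair_unique {c X A B} h.
#[local] Arguments bang_unique {c A} f.

Section Products.
Context {C : Cat}.

Lemma hom_ext {X A B : Ob C} (h h' : Hom X (prod A B)) :
  comp pi1 h = comp pi1 h' -> comp pi2 h = comp pi2 h' -> h = h'.
Proof.
  intros E1 E2. rewrite (pair_unique h), (pair_unique h'), E1, E2. reflexivity.
Qed.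

Lemma pair_comp {Y X A B : Ob C} (f : Hom X A) (g : Hom X B) (h : Hom Y X) :
  comp (pair f g) h = pair (comp f h) (comp g h).
Proof.
  apply hom_ext; rewrite comp_assoc, ?pi1_pair, ?pi2_pair; reflexivity.
Qed.

Lemma pair_pi1_pi2 (A B : Ob C) : pair (@pi1 C A B) pi2 = idm (prod A B).
Proof. apply hom_ext; rewrite ?pi1_pair, ?pi2_pair, comp_idr; reflexivity. Qed.

Lemma prodmap_pair {Y X Z A B : Ob C} (f : Hom X A) (g : Hom Z B) (u : Hom Y X) (v : Hom Y Z) :
  comp (prodmap f g) (pair u v) = pair (comp f u) (comp g v).
Proof.
  unfold prodmap. rewrite pair_comp, <- !comp_assoc, pi1_pair, pi2_pair. reflexivity.
Qed.

Lemma hom_term_eq {A : Ob C} (f g : Hom A term) : f = g.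
Proof. rewrite (bang_unique f), (bang_unique g). reflexivity. Qed.

Lemma product_iso {W X Z : Ob C} (f : Hom W X) (q : Hom W Z) : is_product f q ->
  exists j : Hom (prod X Z) W,
    comp f j = pi1 /\ comp q j = pi2 /\ comp j (pair f q) = idm W.
Proof.
  intro Hp. destruct (Hp _ pi1 pi2) as [j [[E1 E2] _]].
  exists j. split; [exact E1|split; [exact E2|]].
  destruct (Hp _ f q) as [u [_ Hu]].
  rewrite (Hu (comp j (pair f q))), (Hu (idm W)); try apply comp_idr.
  - reflexivity.
  - rewrite comp_assoc, E1, pi1_pair. reflexivity.
  - rewrite comp_assoc, E2, pi2_pair. reflexivity.
Qed.

(* W is a retract of W x Z, and W x Z is isomorphic to the initial object Z. *)
Lemma initial_of_hom_stable_initial {W Z : Ob C} (w : Hom W Z) :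
  is_stable_initial Z -> is_initial W.
Proof.
  intros [HI HS] V. destruct (HI V) as [f0 Hf0].
  destruct (HS W) as [i [j [Eji Eij]]].
  exists (comp f0 w). intro u.
  assert (Hpi1 : forall a : Hom (prod W Z) V, a = comp f0 i).
  { intro a. rewrite <- (comp_idr a), <- Eji, comp_assoc, (Hf0 (comp a j)). reflexivity. }
  assert (Hret : forall a : Hom W V, a = comp (comp a pi1) (pair (idm W) w)).
  { intro a. rewrite <- comp_assoc, pi1_pair, comp_idr. reflexivity. }
  rewrite (Hret u), (Hret (comp f0 w)), (Hpi1 (comp u pi1)), (Hpi1 (comp (comp f0 w) pi1)).
  reflexivity.
Qed.

End Products.

Create HintDb cat_simpl.
#[local] Hint Rewrite <- @comp_assoc : cat_simpl.
#[local] Hint Rewrite @pi1_pair @pi2_pair @comp_idl @comp_idr @pair_comp : cat_simpl.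
Ltac cat_simpl := unfold prodmap, diag; autorewrite with cat_simpl; try reflexivity.

Section Adjoints.
Context {C : Cat} (D : Doctrine C).

Lemma right_adj_unique {W X : Ob C} (f : Hom W X) (P P' : Pr D W -> Pr D X) :
  right_adj D f P -> right_adj D f P' -> forall gamma, P gamma = P' gamma.
Proof.
  intros HP HP' gamma. apply le_antisym.
  - apply HP', HP, le_refl.
  - apply HP, HP', le_refl.
Qed.

End Adjoints.

Section Heaco.
Context {C : Cat} {D : Doctrine C} (H : HeacoStr D).

Notation bot := (hs_bot H).
Notation delta := (hs_delta H).
Notation coc := (hs_coc H).
Notation ccl := (hs_ccl H).

Lemma le_bot {A} (a : Pr D A) : le (bot A) a.
Proof. exact (hs_bot_spec H A a). Qed.

Lemma le_bot_eq {A} (a : Pr D A) : le a (bot A) -> a = bot A.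
Proof. intro h. exact (le_antisym h (le_bot a)). Qed.

Lemma meet_exists {A} (a b : Pr D A) : exists m, is_meet D m a b.
Proof. exact (proj1 (hs_primary H) A a b). Qed.

Lemma re_meet {X A} (f : Hom X A) (m a b : Pr D A) :
  is_meet D m a b -> is_meet D (re f m) (re f a) (re f b).
Proof. exact (proj2 (hs_primary H) X A f a b m). Qed.

Lemma le_meet {A} (m a b d : Pr D A) : is_meet D m a b -> le d m <-> le d a /\ le d b.
Proof.
  intros [Hma [Hmb Hm]]. split.
  - intro h. exact (conj (le_trans m h Hma) (le_trans m h Hmb)).
  - intros [ha hb]. exact (Hm d ha hb).
Qed.

(** * Equality *)

Lemma le_delta_refl {Y A} (f : Hom Y A) (c : Pr D Y) : le c (re (pair f f) (delta A)).
Proof.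
  set (psi := re (@pi1 _ Y A) c).
  destruct (meet_exists (re (pair pi1 (comp pi1 pi2)) psi)
              (re (pair (comp pi1 pi2) (comp pi2 pi2)) (delta A))) as [m Hm].
  assert (Hpsi : le psi (re (@pair _ _ _ A pi2 pi2) (delta A))).
  { apply (le_trans _ (proj1 (hs_elementary H A Y psi m Hm) (le_refl m))).
    apply (le_trans _ (re_mono _ (proj1 (proj2 Hm)))).
    rewrite <- re_comp. replace (comp _ _) with (@pair _ _ _ A (@pi2 _ Y A) pi2) by cat_simpl.
    apply le_refl. }
  pose proof (re_mono (pair (idm Y) f) Hpsi) as K.
  unfold psi in K. rewrite <- !re_comp, pi1_pair, re_id in K.
  replace (comp (pair pi2 pi2) (pair (idm Y) f)) with (pair f f) in K by cat_simpl.
  exact K.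
Qed.

Definition top (A : Ob C) : Pr D A := re (diag A) (delta A).

Lemma le_top {A} (a : Pr D A) : le a (top A).
Proof. exact (le_delta_refl (idm A) a). Qed.

Lemma top_le_eq {A} (a : Pr D A) : le (top A) a -> a = top A.
Proof. intro h. exact (le_antisym (le_top a) h). Qed.

Lemma re_top {X A} (f : Hom X A) : re f (top A) = top X.
Proof.
  apply top_le_eq. unfold top at 2. rewrite <- re_comp.
  replace (comp (diag A) f) with (pair f f) by cat_simpl. apply le_delta_refl.
Qed.

Lemma delta_subst {Y A W} (psi : Pr D (prod Y A)) (w : Hom W Y) (u v : Hom W A) (c : Pr D W) :
  le c (re (pair v u) (delta A)) -> le c (re (pair w v) psi) -> le c (re (pair w u) psi).
Proof.
  intros Hvu Hwv.
  destruct (meet_exists (re (pair pi1 (comp pi1 pi2)) psi)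
              (re (pair (comp pi1 pi2) (comp pi2 pi2)) (delta A))) as [m Hm].
  (* The counit of the elementary adjunction at phi := psi(x, a2) *)
  assert (Hcounit : le m (re (pair pi1 (comp pi2 pi2)) psi)).
  { apply (hs_elementary H A Y psi _ Hm). rewrite <- re_comp.
    replace (comp _ _) with (idm (prod Y A)) by (cat_simpl; symmetry; apply pair_pi1_pi2).
    rewrite re_id. apply le_refl. }
  set (t := pair w (pair v u)).
  destruct (re_meet t _ _ _ Hm) as [_ [_ Ht]]. rewrite <- !re_comp in Ht.
  replace (comp (pair pi1 (comp pi1 pi2)) t) with (pair w v) in Ht by (unfold t; cat_simpl).
  replace (comp (pair (comp pi1 pi2) (comp pi2 pi2)) t) with (pair v u) in Ht by (unfold t; cat_simpl).
  apply (le_trans _ (Ht c Hwv Hvu)). apply (le_trans _ (re_mono t Hcounit)).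
  rewrite <- re_comp. replace (comp _ t) with (pair w u) by (unfold t; cat_simpl).
  apply le_refl.
Qed.

Lemma delta_sym {W A} (u v : Hom W A) (c : Pr D W) :
  le c (re (pair u v) (delta A)) -> le c (re (pair v u) (delta A)).
Proof.
  intro Huv.
  pose proof (delta_subst (re (pair pi2 pi1) (delta A)) u v u c Huv) as K.
  rewrite <- !re_comp in K.
  replace (comp (pair pi2 pi1) (pair u v)) with (pair v u) in K by cat_simpl.
  apply K. replace (comp (pair pi2 pi1) (pair u u)) with (pair u u) by cat_simpl.
  apply le_delta_refl.
Qed.

Lemma delta_subst_re {W A} (u v : Hom W A) (rho : Pr D A) (c : Pr D W) :
  le c (re (pair v u) (delta A)) -> le c (re v rho) -> le c (re u rho).
Proof.
  intros Hvu Hv.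
  pose proof (delta_subst (re pi2 rho) (bang W) u v c Hvu) as K.
  rewrite <- !re_comp, !pi2_pair in K. exact (K Hv).
Qed.

Lemma re_eq_of_top_le_delta {W A} (u v : Hom W A) :
  le (top W) (re (pair u v) (delta A)) -> forall rho : Pr D A, re u rho = re v rho.
Proof.
  intros Huv rho. apply le_antisym.
  - apply (delta_subst_re v u); [|apply le_refl]. exact (le_trans _ (le_top _) Huv).
  - apply (delta_subst_re u v); [|apply le_refl].
    apply delta_sym. exact (le_trans _ (le_top _) Huv).
Qed.

(** * Co-comprehension *)

Lemma le_of_re_ccl_bot {A} (a b : Pr D A) : le (re (ccl A b) a) (bot _) -> le a b.
Proof.
  intro h. apply (hs_ccl_full H A).
  destruct (hs_ccl_univ H A a _ (ccl A b) (le_bot_eq _ h)) as [g [Hg _]].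
  exists g. exact Hg.
Qed.

Lemma le_of_coc_initial {A} (a b : Pr D A) : is_initial (coc A b) -> le a b.
Proof.
  intro Hb. apply (hs_ccl_full H A).
  destruct (Hb (coc A a)) as [g _]. destruct (Hb A) as [h Hh].
  exists g. rewrite (Hh (ccl A b)). apply Hh.
Qed.

Lemma le_of_hom_stable_initial {Y Z} (w : Hom Y Z) :
  is_stable_initial Z -> forall a b : Pr D Y, le a b.
Proof.
  intros HZ a b. apply le_of_coc_initial.
  exact (initial_of_hom_stable_initial (comp w (ccl Y b)) HZ).
Qed.

Lemma re_section_bot {X A} (s : Hom X A) (r : Hom A X) :
  comp r s = idm X -> re s (bot A) = bot X.
Proof.
  intro E. apply le_bot_eq. apply (le_trans _ (re_mono s (le_bot (re r (bot X))))).
  rewrite <- re_comp, E, re_id. apply le_refl.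
Qed.

(* AC at the terminal object provides a global element of every object
   that is not stable initial. *)
Definition point {X} (hX : ~ is_stable_initial X) : Hom term X :=
  hs_eps H term hX (bot (prod term X)).

(* The formula "exists y, ceil(z) y = x", its existential witnessed by AC. *)
Definition ccl_image {A} (z : Pr D A) (h : ~ is_stable_initial (coc A z)) : Pr D A :=
  re (pair (hs_eps' H A h (graph D delta (ccl A z))) (idm A)) (graph D delta (ccl A z)).

Lemma ccl_image_delta {A} (z : Pr D A) (h : ~ is_stable_initial (coc A z)) :
  ccl_image z h
  = re (pair (comp (ccl A z) (hs_eps' H A h (graph D delta (ccl A z)))) (idm A)) (delta A).
Proof.
  unfold ccl_image, graph. rewrite <- re_comp, prodmap_pair, comp_idl. reflexivity.
Qed.

Lemma top_le_re_ccl_image {A} (z : Pr D A) (h : ~ is_stable_initial (coc A z)) :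
  le (top _) (re (ccl A z) (ccl_image z h)).
Proof.
  set (m := ccl A z). set (G := graph D delta m).
  unfold ccl_image. fold m G. rewrite <- hs_eps'_spec.
  pose proof (proj1 (hs_Sigma'_adj H A h G _) (le_refl _)) as Hunit.
  pose proof (re_mono (pair (idm _) m) Hunit) as K.
  unfold G, graph in K. rewrite <- !re_comp, pi2_pair, prodmap_pair, comp_idl, comp_idr in K.
  exact (le_trans _ (le_delta_refl m _) K).
Qed.

Lemma ccl_image_bot {A} (h : ~ is_stable_initial (coc A (bot A))) :
  ccl_image (bot A) h = top A.
Proof.
  destruct (hs_ccl_univ H A (bot A) A (idm A) (re_id _)) as [s [Hs _]].
  apply top_le_eq. rewrite <- (re_top s).
  apply (le_trans _ (re_mono s (top_le_re_ccl_image (bot A) h))).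
  rewrite <- re_comp, Hs, re_id. apply le_refl.
Qed.

(* By the eaco condition at alpha = bot, ceil(f^* bot) o eps is internally
   equal to the identity, so f^* bot = eps^* ceil^* f^* bot = eps^* bot. *)
Lemma re_bot_le {X A} (f : Hom X A) (h1 : ~ is_stable_initial (coc A (bot A)))
    (h2 : ~ is_stable_initial (coc X (re f (bot A)))) :
  le (re f (bot A)) (bot X).
Proof.
  pose proof (hs_eaco H X A f (bot A) h1 h2) as E.
  change (re f (ccl_image (bot A) h1) = ccl_image (re f (bot A)) h2) in E.
  rewrite ccl_image_bot, re_top, ccl_image_delta in E.
  set (g := re f (bot A)) in *.
  set (e := hs_eps' H X h2 (graph D delta (ccl X g))) in E.
  assert (Hid : forall rho : Pr D X, re (comp (ccl X g) e) rho = re (idm X) rho).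
  { apply re_eq_of_top_le_delta. rewrite <- E. apply le_refl. }
  rewrite <- (re_id g), <- Hid, re_comp, hs_ccl_bot.
  apply (le_trans _ (re_mono e (le_bot (re (ccl X g) (bot X))))).
  rewrite <- re_comp, Hid, re_id. apply le_refl.
Qed.

Lemma re_bot {X A} (f : Hom X A) : re f (bot A) = bot X.
Proof.
  apply le_bot_eq.
  destruct (classic (exists Z (w : Hom X Z), is_stable_initial Z)) as [[Z [w HZ]]|NX].
  { apply (le_of_hom_stable_initial w HZ). }
  apply re_bot_le.
  - intro S. destruct (hs_ccl_univ H A (bot A) A (idm A) (re_id _)) as [s _].
    apply NX. exists (coc A (bot A)), (comp s f). exact S.
  - intro S.
    assert (hX : ~ is_stable_initial X) by (intro SX; apply NX; exists X, (idm X); exact SX).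
    assert (Hpt : re (point hX) (re f (bot A)) = bot term).
    { rewrite <- re_comp. apply (re_section_bot _ (bang A)). apply hom_term_eq. }
    destruct (hs_ccl_univ H X _ term (point hX) Hpt) as [t _].
    apply NX. exists (coc X (re f (bot A))), (comp t (bang X)). exact S.
Qed.

(** * Complements *)

(* When {z}^o is stable initial, z is the top element (le_of_coc_initial). *)
Definition neg {X} (z : Pr D X) : Pr D X :=
  match excluded_middle_informative (is_stable_initial (coc X z)) with
  | left _ => bot X
  | right h => ccl_image z h
  end.

Lemma neg_disjoint {X} (z d : Pr D X) : le d (neg z) -> le d z -> le d (bot X).
Proof.
  unfold neg. destruct (excluded_middle_informative _) as [_|h]; [intros Hd _; exact Hd|].
  rewrite ccl_image_delta. intros Hd Hz.
  pose proof (delta_subst_re _ (idm X) z d (delta_sym _ _ d Hd)) as K.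
  rewrite re_id, re_comp, hs_ccl_bot, re_bot in K. exact (K Hz).
Qed.

Lemma top_le_re_neg_of_bot {W X} (g : Hom W X) (z : Pr D X) :
  le (re g z) (bot W) -> le (top W) (re g (neg z)).
Proof.
  intro Hg. unfold neg. destruct (excluded_middle_informative _) as [S|h].
  - pose proof (le_of_coc_initial (top X) z (proj1 S)) as Hz.
    apply (le_trans _ (re_mono g Hz)) in Hg. rewrite re_top in Hg.
    exact (le_trans _ Hg (le_bot _)).
  - destruct (hs_ccl_univ H X z W g (le_bot_eq _ Hg)) as [u [Hu _]].
    rewrite <- Hu, re_comp, <- (re_top u). apply re_mono, top_le_re_ccl_image.
Qed.

Lemma top_le_re_of_re_neg_bot {W X} (g : Hom W X) (z : Pr D X) :
  le (re g (neg z)) (bot W) -> le (top W) (re g z).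
Proof.
  intro Hg. apply le_of_re_ccl_bot. rewrite re_top.
  set (t := ccl W (re g z)).
  assert (Ht : le (re (comp g t) z) (bot _)).
  { rewrite re_comp. unfold t. rewrite hs_ccl_bot. apply le_refl. }
  apply (le_trans _ (top_le_re_neg_of_bot _ z Ht)).
  rewrite re_comp, <- (re_bot t). exact (re_mono t Hg).
Qed.

Lemma re_bot_of_disjoint {O W} (k : Hom O W) (c y : Pr D W) :
  le (top O) (re k y) -> (forall d, le d c -> le d y -> le d (bot W)) ->
  le (re k c) (bot O).
Proof.
  intros Hy Hd. destruct (meet_exists c y) as [m Hm].
  pose proof (Hd m (proj1 Hm) (proj1 (proj2 Hm))) as Hmb.
  destruct (re_meet k _ _ _ Hm) as [_ [_ Hk]].
  apply (le_trans _ (Hk _ (le_refl _) (le_trans _ (le_top _) Hy))).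
  rewrite <- (re_bot k). exact (re_mono k Hmb).
Qed.

Lemma le_neg {X} (z c : Pr D X) :
  le c (neg z) <-> forall d, le d c -> le d z -> le d (bot X).
Proof.
  split.
  - intros Hc d Hdc Hdz. exact (neg_disjoint z d (le_trans _ Hdc Hc) Hdz).
  - intro Hc. apply le_of_re_ccl_bot, (re_bot_of_disjoint _ c z); [|exact Hc].
    apply top_le_re_of_re_neg_bot. rewrite hs_ccl_bot. apply le_refl.
Qed.

Lemma neg_neg {X} (z : Pr D X) : neg (neg z) = z.
Proof.
  apply le_antisym.
  - apply le_of_re_ccl_bot, (re_bot_of_disjoint _ _ (neg z)).
    + apply top_le_re_neg_of_bot. rewrite hs_ccl_bot. apply le_refl.
    + intros d Hd Hnz. exact (neg_disjoint _ d Hd Hnz).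
  - apply le_neg. intros d Hdz Hnz. exact (neg_disjoint z d Hnz Hdz).
Qed.

Lemma le_neg_swap {X} (a b : Pr D X) : le a (neg b) <-> le b (neg a).
Proof. rewrite !le_neg. split; intros h d h1 h2; exact (h d h2 h1). Qed.

Lemma le_neg_contra {X} (a b : Pr D X) : le a b <-> le (neg b) (neg a).
Proof. rewrite le_neg_swap, neg_neg. reflexivity. Qed.

Lemma le_disjoint_neg {X} (x c : Pr D X) :
  le x c <-> forall d, le d x -> le d (neg c) -> le d (bot X).
Proof. rewrite <- (neg_neg c) at 1. apply le_neg. Qed.

Lemma re_neg {W X} (g : Hom W X) (z : Pr D X) : re g (neg z) = neg (re g z).
Proof.
  apply le_antisym.
  - apply le_neg. intros d Hdn Hdz. destruct (meet_exists (neg z) z) as [m Hm].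
    pose proof (neg_disjoint z m (proj1 Hm) (proj1 (proj2 Hm))) as Hmb.
    destruct (re_meet g _ _ _ Hm) as [_ [_ Hg]].
    apply (le_trans _ (Hg d Hdn Hdz)). rewrite <- (re_bot g). exact (re_mono g Hmb).
  - apply le_of_re_ccl_bot, (re_bot_of_disjoint _ _ (re g z)).
    + rewrite <- re_comp. apply top_le_re_of_re_neg_bot.
      rewrite re_comp, hs_ccl_bot. apply le_refl.
    + intros d Hd Hz. exact (neg_disjoint _ d Hd Hz).
Qed.

Lemma neg_top {X} : neg (top X) = bot X.
Proof. apply le_bot_eq. exact (neg_disjoint _ _ (le_refl _) (le_top _)). Qed.

(** * Joins and co-implication *)

Lemma join_unique {X} (j j' a b : Pr D X) : is_join D j a b -> is_join D j' a b -> j = j'.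
Proof. intros [h1 [h2 h3]] [h1' [h2' h3']]. apply le_antisym; auto. Qed.

Lemma join_of_meet_neg {X} (a b m : Pr D X) :
  is_meet D m (neg a) (neg b) -> is_join D (neg m) a b.
Proof.
  intros [Ha [Hb Hm]]. split; [|split].
  - apply le_neg_swap, Ha.
  - apply le_neg_swap, Hb.
  - intros c Hac Hbc. apply le_neg_contra. rewrite neg_neg.
    apply Hm; apply (proj1 (le_neg_contra _ _)); assumption.
Qed.

Lemma join_exists {X} (a b : Pr D X) : exists j, is_join D j a b.
Proof.
  destruct (meet_exists (neg a) (neg b)) as [m Hm].
  exists (neg m). exact (join_of_meet_neg a b m Hm).
Qed.

Lemma re_join {W X} (g : Hom W X) (j a b : Pr D X) :
  is_join D j a b -> is_join D (re g j) (re g a) (re g b).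
Proof.
  intro Hj. destruct (meet_exists (neg a) (neg b)) as [m Hm].
  rewrite (join_unique _ _ _ _ Hj (join_of_meet_neg a b m Hm)), re_neg.
  apply join_of_meet_neg. rewrite <- !re_neg. exact (re_meet g _ _ _ Hm).
Qed.

Definition is_coimp {X} (x a b : Pr D X) : Prop :=
  forall c, le x c <-> (forall j, is_join D j c a -> le b j).

Lemma coimp_of_meet_neg {X} (x a b : Pr D X) : is_meet D x b (neg a) -> is_coimp x a b.
Proof.
  intros Hx c. destruct (meet_exists (neg c) (neg a)) as [m Hm].
  pose proof (join_of_meet_neg c a m Hm) as Hj.
  transitivity (le b (neg m)).
  - rewrite le_disjoint_neg, le_neg.
    split; intros h d Hd1 Hd2.
    + apply (le_meet _ _ _ d Hm) in Hd2 as [Hdc Hda].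
      apply h; [apply (le_meet _ _ _ d Hx)|]; auto.
    + apply (le_meet _ _ _ d Hx) in Hd1 as [Hdb Hda].
      apply h; [|apply (le_meet _ _ _ d Hm)]; auto.
  - split.
    + intros h j Hj'. rewrite (join_unique _ _ _ _ Hj' Hj). exact h.
    + intro h. exact (h _ Hj).
Qed.

Lemma coimp_exists {X} (a b : Pr D X) : exists x, is_coimp x a b.
Proof.
  destruct (meet_exists b (neg a)) as [x Hx].
  exists x. exact (coimp_of_meet_neg x a b Hx).
Qed.

Lemma coimp_unique {X} (x x' a b : Pr D X) : is_coimp x a b -> is_coimp x' a b -> x = x'.
Proof.
  intros Hx Hx'. apply le_antisym.
  - apply Hx, Hx', le_refl.
  - apply Hx', Hx, le_refl.
Qed.

Lemma re_coimp {W X} (g : Hom W X) (x a b : Pr D X) :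
  is_coimp x a b -> is_coimp (re g x) (re g a) (re g b).
Proof.
  intro Hx. destruct (meet_exists b (neg a)) as [x' Hx'].
  rewrite (coimp_unique x x' a b Hx (coimp_of_meet_neg x' a b Hx')).
  apply coimp_of_meet_neg. rewrite <- re_neg. exact (re_meet g _ _ _ Hx').
Qed.

(** * Quantifiers *)

Lemma left_adj_exists {W X} (f : Hom W X) :
  is_product_projection f -> exists S, left_adj D f S.
Proof.
  intros [Z [q Hp]].
  destruct (classic (is_stable_initial Z)) as [SZ|hZ].
  - exists (fun _ => bot X). intros psi phi.
    split; intros _; [apply (le_of_hom_stable_initial q SZ)|apply le_bot].
  - destruct (product_iso f q Hp) as [j [E1 [_ E3]]].
    exists (fun g => hs_Sigma H X hZ (re j g)). intros psi phi.
    rewrite (hs_Sigma_adj H X hZ (re j psi) phi). split.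
    + intro h. rewrite <- (re_id psi), <- E3, re_comp.
      apply (le_trans _ (re_mono _ h)). rewrite <- re_comp, pi1_pair. apply le_refl.
    + intro h. apply (le_trans _ (re_mono _ h)). rewrite <- re_comp, E1. apply le_refl.
Qed.

(* AC makes the existential quantifier along a projection with non-stable-initial
   fibre an instance of substitution along a section. *)
Lemma left_adj_le_re_section {W X Z} (f : Hom W X) (q : Hom W Z) (S : Pr D W -> Pr D X) :
  is_product f q -> ~ is_stable_initial Z -> left_adj D f S ->
  forall g, exists s : Hom X W, comp f s = idm X /\ le (S g) (re s g).
Proof.
  intros Hp hZ HS g. destruct (product_iso f q Hp) as [j [E1 [_ E3]]].
  set (eps := hs_eps H X hZ (re j g)).
  exists (comp j (pair (idm X) eps)). split.
  - rewrite comp_assoc, E1, pi1_pair. reflexivity.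
  - apply (le_trans (hs_Sigma H X hZ (re j g))).
    + apply HS. rewrite <- (re_id g) at 1. rewrite <- E3, re_comp.
      replace f with (comp (@pi1 _ X Z) (pair f q)) at 2 by apply pi1_pair.
      rewrite re_comp. apply re_mono. apply (hs_Sigma_adj H X hZ). apply le_refl.
    + rewrite hs_eps_spec. fold eps. rewrite <- re_comp. apply le_refl.
Qed.

Lemma left_adj_beck_chevalley {X Y W V : Ob C} (f : Hom W X) (h : Hom Y X)
    (g : Hom V Y) (k : Hom V W) :
  is_product_projection f -> is_pullback h f g k ->
  forall Sf Sg, left_adj D f Sf -> left_adj D g Sg ->
  forall gamma, re h (Sf gamma) = Sg (re k gamma).
Proof.
  intros [Z [q Hp]] [Eq Hpb] Sf Sg Hf Hg gamma. apply le_antisym.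
  - destruct (classic (is_stable_initial Z)) as [SZ|hZ].
    + assert (Sf gamma = bot X) as ->.
      { apply le_bot_eq, Hf. apply (le_of_hom_stable_initial q SZ). }
      rewrite re_bot. apply le_bot.
    + destruct (left_adj_le_re_section f q Sf Hp hZ Hf gamma) as [s [Es Hsg]].
      destruct (Hpb _ (idm Y) (comp s h)) as [u [[Eu1 Eu2] _]].
      { rewrite comp_idr, comp_assoc, Es, comp_idl. reflexivity. }
      apply (le_trans _ (re_mono h Hsg)). rewrite <- re_comp, <- Eu2, re_comp.
      apply (le_trans _ (re_mono u (proj1 (Hg _ _) (le_refl _)))).
      rewrite <- re_comp, Eu1, re_id. apply le_refl.
  - apply Hg. rewrite <- re_comp, Eq, re_comp. apply re_mono, Hf, le_refl.
Qed.

Lemma right_adj_of_left_adj {W X} (f : Hom W X) (S : Pr D W -> Pr D X) :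
  left_adj D f S -> right_adj D f (fun gamma => neg (S (neg gamma))).
Proof.
  intros HS phi psi.
  rewrite le_neg_contra, <- re_neg, <- (HS (neg psi) (neg phi)), le_neg_swap. reflexivity.
Qed.

Lemma right_adj_exists {W X} (f : Hom W X) :
  is_product_projection f -> exists P, right_adj D f P.
Proof.
  intro Pf. destruct (left_adj_exists f Pf) as [S HS].
  exists (fun gamma => neg (S (neg gamma))). exact (right_adj_of_left_adj f S HS).
Qed.

Lemma right_adj_beck_chevalley {X Y W V : Ob C} (f : Hom W X) (h : Hom Y X)
    (g : Hom V Y) (k : Hom V W) :
  is_product_projection f -> is_product_projection g -> is_pullback h f g k ->
  forall Pf Pg, right_adj D f Pf -> right_adj D g Pg ->
  forall gamma, re h (Pf gamma) = Pg (re k gamma).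
Proof.
  intros PPf PPg Hpb Pf Pg HPf HPg gamma.
  destruct (left_adj_exists f PPf) as [Sf HSf]. destruct (left_adj_exists g PPg) as [Sg HSg].
  rewrite (right_adj_unique D f _ _ HPf (right_adj_of_left_adj f Sf HSf)).
  rewrite (right_adj_unique D g _ _ HPg (right_adj_of_left_adj g Sg HSg)).
  rewrite re_neg, (left_adj_beck_chevalley f h g k PPf Hpb Sf Sg HSf HSg), re_neg.
  reflexivity.
Qed.

Lemma re_diag_bot_iff {X} (alpha : Pr D (prod X X)) :
  le (re (diag X) alpha) (bot X) <-> le alpha (neg (delta X)).
Proof.
  split.
  - intro Halpha. apply le_neg. intros d Hd Hdelta.
    rewrite <- (re_id alpha), <- pair_pi1_pi2 in Hd.
    rewrite <- (re_id (delta X)), <- pair_pi1_pi2 in Hdelta.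
    pose proof (delta_subst alpha pi1 pi1 pi2 d (delta_sym _ _ _ Hdelta) Hd) as K.
    apply (le_trans _ K). replace (pair (@pi1 _ X X) pi1) with (comp (diag X) (@pi1 _ X X))
      by cat_simpl.
    rewrite re_comp, <- (re_bot pi1). exact (re_mono _ Halpha).
  - intro h. apply (le_trans _ (re_mono (diag X) h)). rewrite re_neg. fold (top X).
    rewrite neg_top. apply le_refl.
Qed.

(** * The opposite doctrine *)

Lemma op_full_comprehension : has_full_comprehension (op_doctrine D).
Proof.
  unfold has_full_comprehension, is_comprehension, is_top. cbn [le re Pr op_doctrine].
  split; [|split].
  - intro A. exists (bot A). apply le_bot.
  - intros A alpha. exists (coc A alpha), (ccl A alpha). split.
    + intro a. rewrite hs_ccl_bot. apply le_bot.
    + intros X f Hf. apply (hs_ccl_univ H), le_bot_eq, Hf.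
  - intros A alpha beta O1 O2 c d [_ Uc] [Hd _] [g Hg].
    apply le_of_re_ccl_bot.
    destruct (Uc _ (ccl A alpha)) as [u [Hu _]].
    { intro a. rewrite hs_ccl_bot. apply le_bot. }
    rewrite <- Hu, <- Hg, <- comp_assoc, re_comp, <- (re_bot (comp g u)).
    apply re_mono, Hd.
Qed.

Lemma op_tripos : tripos (op_doctrine D).
Proof.
  unfold tripos, is_top, is_bot, is_meet, is_join, is_imp, left_adj, right_adj.
  cbn [le re Pr op_doctrine].
  split; [|split; [|split; [|split; [|split]]]].
  - intro A. split; [exists (bot A); apply le_bot|].
    split; [exists (top A); apply le_top|].
    split; [exact join_exists|]. split; [exact meet_exists|]. exact coimp_exists.
  - intros X A f. split; [|split; [|split; [|split]]].
    + intros t Ht a. rewrite (le_bot_eq t (Ht _)), re_bot. apply le_bot.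
    + intros b Hb a. rewrite (top_le_eq b (Hb _)), re_top. apply le_top.
    + intros m a b. exact (re_join f m a b).
    + intros j a b Hj. exact (re_meet f j a b Hj).
    + intros x a b. exact (re_coimp f x a b).
  - intros W X f Pf. split.
    + destruct (right_adj_exists f Pf) as [P HP].
      exists P. intros psi phi. symmetry. exact (HP phi psi).
    + destruct (left_adj_exists f Pf) as [S HS].
      exists S. intros phi psi. symmetry. exact (HS psi phi).
  - intros X Y W V f h g k Pf Pg Hpb. split; intros Sf Sg HSf HSg.
    + apply (right_adj_beck_chevalley f h g k Pf Pg Hpb);
        intros p q; symmetry; [apply HSf|apply HSg].
    + apply (left_adj_beck_chevalley f h g k Pf Hpb);
        intros p q; symmetry; [apply HSf|apply HSg].
  - intro X. exists (neg (delta X)). intro alpha. rewrite <- re_diag_bot_iff. split.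
    + intro h. exact (h _ le_bot).
    + intros h t _. exact (le_trans _ h (le_bot t)).
  - exact (hs_higher H).
Qed.

End Heaco.

Theorem mainTheorem13 (C : Cat) (D : Doctrine C) :
  heaco D -> tripos (op_doctrine D) /\ has_full_comprehension (op_doctrine D).
Proof.
  intros [H]. exact (conj (op_tripos H) (op_full_comprehension H)).
Qed.
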